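(* Consider the SDP pair and one-step ADMM in the context, under the standing assumptions, and suppose $Z^{(k)}\to Z_\star=X_\star-\sigma S_\star$ where $(X_\star,y_\star,S_\star)$ is a KKT point with $\operatorname{rank}X_\star+\operatorname{rank}S_\star=n$. Suppose moreover primal nondegeneracy $\mathcal N_{X_\star}\cap\mathcal R(\mathcal A^* )=\{0\}$ and dual nondegeneracy $\mathcal N_{S_\star}\cap\mathcal N(\mathcal A)=\{0\}$ hold. Then for any $\rho\in(\|\mathcal M\|_{\mathrm{op}},1)$ there exists $\bar k_{\mathrm{ND}}\in\mathbb N$ such that for every integer $k\ge\bar k_{\mathrm{ND}}$, $\|Z^{(k+1)}-Z_\star\|_F\le\rho\|Z^{(k)}-Z_\star\|_F$.
   Context: $\mathbb S^n$: real symmetric $n\times n$ matrices, $\langle X,Y\rangle=\operatorname{tr}(XY)$, Frobenius norm $\|\cdot\|_F$; $\Pi_{\mathbb S^n_+}$ the projection onto the PSD cone. Data $C,A_1,\dots,A_m\in\mathbb S^n$, $b\in\mathbb R^m$; $\mathcal AX=(\langle A_i,X\rangle)_{i=1}^m$, $\mathcal A^*y=\sum_iy_iA_i$; $\mathcal R(\mathcal A^* )$ its range and $\mathcal N(\mathcal A)$ the null space of $\mathcal A$. Primal: minimize $\langle C,X\rangle$ s.t. $\mathcal AX=b$, $X\succeq0$; dual: maximize $b^\top y$ s.t. $\mathcal A^*y+S=C$, $S\succeq0$. KKT point: $(X,y,S)$ with $\mathcal AX=b$, $\mathcal A^*y+S=C$, $\langle X,S\rangle=0$, $X,S\succeq0$.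 Standing assumptions: $\mathcal A$ surjective and KKT set nonempty. $\mathcal P=\mathcal A^*(\mathcal A\mathcal A^* )^{-1}\mathcal A$, $\mathcal P^\perp=\mathrm{Id}-\mathcal P$. For $\sigma>0$, $Z^{(0)}\in\mathbb S^n$, one-step ADMM: $Z^{(k+1)}=\mathcal P(-2\Pi_{\mathbb S^n_+}(Z^{(k)})+Z^{(k)})+\Pi_{\mathbb S^n_+}(Z^{(k)})+\mathcal A^*(\mathcal A\mathcal A^* )^{-1}b+\sigma\mathcal PC-\sigma C$. There is an orthogonal $Q_\star$ with $Z_\star=Q_\star\operatorname{diag}(\lambda_1,\dots,\lambda_n)Q_\star^\top$, $\lambda_1\ge\dots\ge\lambda_r>0>\lambda_{r+1}\ge\dots\ge\lambda_n$, $r=\operatorname{rank}X_\star$, $X_\star=Q_\star\operatorname{diag}(\lambda_1,\dots,\lambda_r,0,\dots,0)Q_\star^\top$, $\sigma S_\star=Q_\star\operatorname{diag}(0,\dots,0,-\lambda_{r+1},\dots,-\lambda_n)Q_\star^\top$. $\mathcal N_{X_\star}=\{Q_\star\begin{pmatrix}0&0\\0&D\end{pmatrix}Q_\star^\top:D\in\mathbb S^{n-r}\}$, $\mathcal N_{S_\star}=\{Q_\star\begin{pmatrix}A&0\\0&0\end{pmatrix}Q_\star^\top:A\in\mathbb S^{r}\}$. $\Theta\in\mathbb R^{(n-r)\times r}$, $\Theta_{ij}=\lambda_j/(\lambda_j-\lambda_{i+r})$; $\Omega=\begin{pmatrix}E_r&\Theta^\top\\\Theta&0\end{pmatrix}$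 ($E_r$ all-ones). With $\circ$ the Hadamard product, $\mathcal D(H)=Q_\star(\Omega\circ(Q_\star^\top HQ_\star))Q_\star^\top$, $\mathcal D^\perp(H)=H-\mathcal D(H)$, $\mathcal M(H)=\mathcal P\mathcal D^\perp(H)+\mathcal P^\perp\mathcal D(H)$; $\|\cdot\|_{\mathrm{op}}$ is the operator norm induced by $\|\cdot\|_F$. *)

From HB Require Import structures.
From mathcomp Require Import all_boot all_order all_algebra.
From mathcomp Require Import all_classical all_reals all_analysis.
Set Implicit Arguments. Unset Strict Implicit. Unset Printing Implicit Defensive.
Import Order.TTheory GRing.Theory Num.Theory.
Local Open Scope classical_set_scope.
Local Open Scope ring_scope.

Section SDP.
Variable R : realType.

Definition inprod n (X Y : 'M[R]_n) : R := \tr (X *m Y).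
Definition frob n (X : 'M[R]_n) : R := Num.sqrt (\tr (X^T *m X)).
Definition symm n (X : 'M[R]_n) : Prop := X^T = X.
Definition psd n (X : 'M[R]_n) : Prop :=
  symm X /\ forall v : 'cV[R]_n, 0 <= (v^T *m X *m v) 0 0.

Definition projPSD n (Z : 'M[R]_n) : 'M[R]_n :=
  xget 0 [set P | psd P /\ forall Q, psd Q -> frob (Z - P) <= frob (Z - Q)].

Definition Aop n m (As : 'I_m -> 'M[R]_n) (X : 'M[R]_n) : 'cV[R]_m :=
  \col_i inprod (As i) X.
Definition Aadj n m (As : 'I_m -> 'M[R]_n) (y : 'cV[R]_m) : 'M[R]_n :=
  \sum_i y i 0 *: As i.
(* matrix of A Aadj *)
Definition gram n m (As : 'I_m -> 'M[R]_n) : 'M[R]_m :=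
  \matrix_(i, j) inprod (As i) (As j).
Definition Pop n m (As : 'I_m -> 'M[R]_n) (H : 'M[R]_n) : 'M[R]_n :=
  Aadj As (invmx (gram As) *m Aop As H).
Definition Pperp n m (As : 'I_m -> 'M[R]_n) (H : 'M[R]_n) : 'M[R]_n :=
  H - Pop As H.

Definition admm_step n m (As : 'I_m -> 'M[R]_n) (b : 'cV[R]_m) (C : 'M[R]_n)
  (sigma : R) (Z : 'M[R]_n) : 'M[R]_n :=
  Pop As (- (2%:R *: projPSD Z) + Z) + projPSD Z
  + Aadj As (invmx (gram As) *m b) + sigma *: Pop As C - sigma *: C.

Definition A_surj n m (As : 'I_m -> 'M[R]_n) : Prop :=
  forall y : 'cV[R]_m, exists X, symm X /\ Aop As X = y.

Definition KKT n m (As : 'I_m -> 'M[R]_n) (b : 'cV[R]_m) (C : 'M[R]_n)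
  (X : 'M[R]_n) (y : 'cV[R]_m) (S : 'M[R]_n) : Prop :=
  [/\ Aop As X = b, Aadj As y + S = C, inprod X S = 0, psd X & psd S].

(* Omega = [[E_r, Theta^T]; [Theta, 0]], Theta_{ij} = lam_j/(lam_j - lam_{i+r}),
   written entrywise with 0-based indices *)
Definition Omega n (r : nat) (lam : 'I_n -> R) : 'M[R]_n :=
  \matrix_(a, b)
    if (a < r)%N && (b < r)%N then 1
    else if (r <= a)%N && (b < r)%N then lam b / (lam b - lam a)
    else if (a < r)%N && (r <= b)%N then lam a / (lam a - lam b)
    else 0.

Definition hadamard n (A B : 'M[R]_n) : 'M[R]_n := \matrix_(i, j) (A i j * B i j).

Definition Dop n (Q : 'M[R]_n) (r : nat) (lam : 'I_n -> R) (H : 'M[R]_n) : 'M[R]_n :=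
  Q *m hadamard (Omega r lam) (Q^T *m H *m Q) *m Q^T.
Definition Dperp n (Q : 'M[R]_n) (r : nat) (lam : 'I_n -> R) (H : 'M[R]_n) : 'M[R]_n :=
  H - Dop Q r lam H.
Definition Mop n m (As : 'I_m -> 'M[R]_n) (Q : 'M[R]_n) (r : nat) (lam : 'I_n -> R)
  (H : 'M[R]_n) : 'M[R]_n :=
  Pop As (Dperp Q r lam H) + Pperp As (Dop Q r lam H).

Definition opnorm n (L : 'M[R]_n -> 'M[R]_n) : R :=
  sup [set frob (L H) | H in [set H : 'M[R]_n | symm H /\ frob H <= 1]].

(* N_{X*} = { Q [[0,0],[0,D]] Q^T : D in S^{n-r} } *)
Definition in_NX n (Q : 'M[R]_n) (r : nat) (H : 'M[R]_n) : Prop :=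
  exists W : 'M[R]_n, [/\ symm W,
    (forall a b : 'I_n, (a < r)%N || (b < r)%N -> W a b = 0) &
    H = Q *m W *m Q^T].
(* N_{S*} = { Q [[A,0],[0,0]] Q^T : A in S^r } *)
Definition in_NS n (Q : 'M[R]_n) (r : nat) (H : 'M[R]_n) : Prop :=
  exists W : 'M[R]_n, [/\ symm W,
    (forall a b : 'I_n, (r <= a)%N || (r <= b)%N -> W a b = 0) &
    H = Q *m W *m Q^T].

End SDP.

From HB Require Import structures.
From mathcomp Require Import all_boot all_order all_algebra.
From mathcomp Require Import all_classical all_reals all_analysis.
From mathcomp Require Import ring lra.
Import Order.TTheory GRing.Theory Num.Theory.
Import numFieldNormedType.Exports.
Local Open Scope classical_set_scope.
Local Open Scope ring_scope.
Set Implicit Arguments. Unset Strict Implicit. Unset Printing Implicit Defensive.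

(* Write Zs = Xs - sigma Ss = Q diag(lam) Q^T, H = Z - Zs and E = Pi(Z) - Xs. By primal
   and dual feasibility one ADMM step satisfies
     Z+ - Zs = P(H - 2E) + E = M(H) + (I - 2P)(E - D(H)),
   so it suffices to show ||E - D(H)|| = O(||H||^2). The projection Pi is only known
   through its minimizing property, which yields the variational inequality, hence
   ||E|| <= ||H|| (as -sigma Ss is normal to the cone at Xs) and the complementarity
   Pi(Z) (Pi(Z) - Z) = 0. In the eigenbasis of Zs this complementarity is, entry by
   entry, the linear equation solved by Omega o H perturbed by the quadratic term
   E (E - H); the divisors lam_i, lam_i - lam_j, -lam_j stay away from 0 because Zs is
   nonsingular. Thus ||Z+ - Zs|| <= ||M|| ||H|| + c ||H||^2, and since H -> 0 the ratio
   eventually drops below any rho > ||M||. *)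

Section FrobeniusGeometry.
Variables (R : realType) (n : nat).
Implicit Types X Y W : 'M[R]_n.

Definition mxdot X Y : R := \tr (X^T *m Y).

Lemma mxdotE X Y : mxdot X Y = \sum_i \sum_j X i j * Y i j.
Proof.
rewrite /mxdot /mxtrace exchange_big; apply: eq_bigr => j _.
by rewrite !mxE; apply: eq_bigr => i _; rewrite !mxE.
Qed.

Lemma mxdotC X Y : mxdot X Y = mxdot Y X.
Proof. by rewrite !mxdotE; apply: eq_bigr => i _; apply: eq_bigr => j _; rewrite mulrC. Qed.

Lemma mxdot_is_linear X : linear (mxdot X).
Proof. by move=> a Y W; rewrite /mxdot mulmxDr -scalemxAr linearD linearZ. Qed.
HB.instance Definition _ X :=
  GRing.isLinear.Build R 'M[R]_n R _ (mxdot X) (mxdot_is_linear X).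

Lemma mxdotZr a X Y : mxdot X (a *: Y) = a * mxdot X Y.
Proof. exact: linearZ. Qed.

Lemma mxdotDl X Y W : mxdot (Y + W) X = mxdot Y X + mxdot W X.
Proof. by rewrite mxdotC linearD /= !(mxdotC X). Qed.
Lemma mxdotZl a X Y : mxdot (a *: Y) X = a * mxdot Y X.
Proof. by rewrite mxdotC linearZ /= mxdotC. Qed.
Lemma mxdotNl X Y : mxdot (- Y) X = - mxdot Y X.
Proof. by rewrite mxdotC linearN /= mxdotC. Qed.
Lemma mxdotBl X Y W : mxdot (Y - W) X = mxdot Y X - mxdot W X.
Proof. by rewrite mxdotDl mxdotNl. Qed.
Lemma mxdot0l X : mxdot 0 X = 0.
Proof. by rewrite mxdotC linear0. Qed.

Lemma mxdotxx_ge0 X : 0 <= mxdot X X.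
Proof. by rewrite mxdotE; do 2!apply: sumr_ge0 => ? _; rewrite -expr2 sqr_ge0. Qed.

Lemma mxdotxx_eq0 X : mxdot X X = 0 -> X = 0.
Proof.
have sq_ge0 (x : R) : 0 <= x * x by rewrite -expr2 sqr_ge0.
rewrite mxdotE => /eqP; rewrite psumr_eq0 => [/allP rowsX|i _]; last first.
  exact: sumr_ge0.
apply/matrixP => i j; rewrite mxE.
move: (rowsX i (mem_index_enum _)); rewrite implyTb psumr_eq0 // => /allP.
by move=> /(_ j (mem_index_enum _)); rewrite implyTb mulf_eq0 orbb => /eqP.
Qed.

Lemma frob_sqr X : frob X ^+ 2 = mxdot X X.
Proof. by rewrite /frob sqr_sqrtr // mxdotxx_ge0. Qed.

Lemma frob_ge0 X : 0 <= frob X.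
Proof. exact: sqrtr_ge0. Qed.

Lemma frob_eq0 X : frob X = 0 -> X = 0.
Proof. by move=> X0; apply: mxdotxx_eq0; rewrite -frob_sqr X0 expr0n. Qed.

Lemma frob0 : frob (0 : 'M[R]_n) = 0.
Proof. by rewrite /frob -/(mxdot 0 0) linear0 sqrtr0. Qed.

Lemma ler_frob X Y : (frob X <= frob Y) = (mxdot X X <= mxdot Y Y).
Proof. by rewrite -!frob_sqr ler_sqr ?nnegrE ?frob_ge0. Qed.

Lemma frobZ a X : frob (a *: X) = `|a| * frob X.
Proof.
rewrite /frob -/(mxdot _ _) -/(mxdot X X) mxdotZl linearZ /= mulrA -expr2.
by rewrite sqrtrM ?sqr_ge0 // sqrtr_sqr.
Qed.

Lemma frobN X : frob (- X) = frob X.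
Proof. by rewrite -scaleN1r frobZ normrN normr1 mul1r. Qed.

Lemma mxdot_amgm s X Y : 0 < s -> 2 * mxdot X Y <= s * mxdot X X + s^-1 * mxdot Y Y.
Proof.
move=> s_gt0; have := mxdotxx_ge0 (s *: X - Y).
rewrite mxdotBl !linearB /= !mxdotZl !mxdotZr (mxdotC Y X) => sq_ge0.
rewrite -subr_ge0 -(pmulr_rge0 _ s_gt0).
have -> : s * (s * mxdot X X + s^-1 * mxdot Y Y - 2 * mxdot X Y)
    = s * (s * mxdot X X) - s * mxdot X Y + (- (s * mxdot X Y) - - mxdot Y Y).
  by field; rewrite gt_eqF.
by [].
Qed.

Lemma mxdot_le_frob X Y : mxdot X Y <= frob X * frob Y.
Proof.
have [X0|/eqP X_neq0] := eqVneq X 0; first by rewrite X0 mxdot0l frob0 mul0r.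
have [Y0|/eqP Y_neq0] := eqVneq Y 0; first by rewrite Y0 linear0 frob0 mulr0.
have fX : 0 < frob X by rewrite lt_def frob_ge0 andbT; apply/eqP => /frob_eq0.
have fY : 0 < frob Y by rewrite lt_def frob_ge0 andbT; apply/eqP => /frob_eq0.
have := mxdot_amgm X Y (divr_gt0 fY fX); rewrite -!frob_sqr invf_div.
have -> : frob Y / frob X * frob X ^+ 2 + frob X / frob Y * frob Y ^+ 2
    = 2 * (frob X * frob Y) by field; rewrite !gt_eqF.
by rewrite ler_pM2l.
Qed.

Lemma frobD X Y : frob (X + Y) <= frob X + frob Y.
Proof.
rewrite -(ler_pXn2r (n := 2)) ?nnegrE ?addr_ge0 ?frob_ge0 //.
rewrite frob_sqr mxdotDl !linearD /= (mxdotC Y X) sqrrD -!frob_sqr.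
have := mxdot_le_frob X Y; lra.
Qed.

Lemma frobB X Y : frob (X - Y) <= frob X + frob Y.
Proof. by rewrite -(frobN Y); apply: frobD. Qed.

Lemma frob_sum I (s : seq I) (F : I -> 'M[R]_n) :
  frob (\sum_(i <- s) F i) <= \sum_(i <- s) frob (F i).
Proof.
elim: s => [|a s IH]; first by rewrite !big_nil frob0.
by rewrite !big_cons; apply: le_trans (frobD _ _) _; rewrite lerD2l.
Qed.

Lemma entry_le_frob X i j : `|X i j| <= frob X.
Proof.
rewrite -(ler_pXn2r (n := 2)) ?nnegrE ?frob_ge0 // frob_sqr mxdotE real_normK ?num_real //.
have sq_ge0 (x : R) : 0 <= x * x by rewrite -expr2 sqr_ge0.
rewrite (bigD1 i) //= (bigD1 j) //= -expr2 -addrA lerDl.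
by rewrite addr_ge0 ?sumr_ge0 // => k _; apply: sumr_ge0.
Qed.

Lemma frob_le_entry_bound X (c : R) :
  0 <= c -> (forall i j, `|X i j| <= c) -> frob X <= n%:R * c.
Proof.
move=> c_ge0 Xc; rewrite -(ler_pXn2r (n := 2)) ?nnegrE ?mulr_ge0 ?frob_ge0 //.
rewrite frob_sqr mxdotE; apply: (@le_trans _ _ (\sum_(i < n) \sum_(j < n) c ^+ 2)).
  do 2!apply: ler_sum => ? _; rewrite -expr2 -real_normK ?num_real //.
  by rewrite ler_pXn2r ?nnegrE ?normr_ge0.
by rewrite !sumr_const !card_ord -mulrnA mulnn exprMn mulrC -natrX mulr_natr.
Qed.

Lemma frob_conj (U X : 'M[R]_n) : U^T *m U = 1%:M -> frob (U *m X *m U^T) = frob X.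
Proof.
move=> UU; rewrite /frob !trmx_mul trmxK -!mulmxA (mulmxA U^T U) UU mul1mx.
by rewrite mxtrace_mulC -!mulmxA UU mulmx1.
Qed.

Lemma frob_conjT (U X : 'M[R]_n) : U^T *m U = 1%:M -> frob (U^T *m X *m U) = frob X.
Proof. by move=> /mulmx1C UU; rewrite -{2}(trmxK U) frob_conj ?trmxK. Qed.

End FrobeniusGeometry.

Section SymmetricMatrices.
Variables (R : realType) (n : nat).
Implicit Types X Y : 'M[R]_n.

Lemma symmZ a X : symm X -> symm (a *: X).
Proof. by rewrite /symm => sX; rewrite linearZ /= sX. Qed.
Lemma symmD X Y : symm X -> symm Y -> symm (X + Y).
Proof. by rewrite /symm => sX sY; rewrite linearD /= sX sY. Qed.
Lemma symmN X : symm X -> symm (- X).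
Proof. by rewrite /symm => sX; rewrite linearN /= sX. Qed.
Lemma symmB X Y : symm X -> symm Y -> symm (X - Y).
Proof. by move=> sX sY; apply: symmD => //; apply: symmN. Qed.

Lemma symm_congr (M X : 'M[R]_n) : symm X -> symm (M^T *m X *m M).
Proof. by rewrite /symm => sX; rewrite !trmx_mul trmxK sX mulmxA. Qed.

Lemma symm_conj_diag (U : 'M[R]_n) d : symm (U *m diag_mx d *m U^T).
Proof. by have := @symm_congr U^T _ (tr_diag_mx d); rewrite trmxK. Qed.

End SymmetricMatrices.

Section LinearMapBounds.
Variables (R : realType) (n : nat).

Lemma linear_frob_bound (f : {linear 'M[R]_n -> 'M[R]_n}) :
  exists2 K, 0 <= K & forall X, frob (f X) <= K * frob X.
Proof.
exists (\sum_i \sum_j frob (f (delta_mx i j))) => [|X].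
  by do 2!apply: sumr_ge0 => ? _; apply: frob_ge0.
rewrite {1}(matrix_sum_delta X) linear_sum mulr_suml.
apply: le_trans (frob_sum _ _) _; apply: ler_sum => i _.
rewrite linear_sum mulr_suml; apply: le_trans (frob_sum _ _) _; apply: ler_sum => j _.
rewrite linearZ frobZ mulrC ler_wpM2l ?frob_ge0 //; exact: entry_le_frob.
Qed.

Lemma frob_le_opnorm (f : {linear 'M[R]_n -> 'M[R]_n}) X :
  symm X -> frob (f X) <= opnorm f * frob X.
Proof.
move=> sX; have [K K_ge0 fK] := linear_frob_bound f.
rewrite /opnorm; set S := [set frob (f Y) | Y in [set Y | symm Y /\ frob Y <= 1]].
have supS : has_sup S.
  split; first by exists 0, 0; [split; rewrite ?frob0 // /symm trmx0 | rewrite linear0 frob0].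
  exists K => _ [Y [_ fY] <-]; apply: le_trans (fK Y) _.
  by rewrite -{2}(mulr1 K) ler_wpM2l.
have [X0|/eqP X_neq0] := eqVneq X 0; first by rewrite X0 linear0 frob0 mulr0.
have fX : 0 < frob X by rewrite lt_def frob_ge0 andbT; apply/eqP => /frob_eq0.
have /(sup_upper_bound supS) : S (frob (f ((frob X)^-1 *: X))).
  exists ((frob X)^-1 *: X) => //; split; first exact: symmZ.
  by rewrite frobZ ger0_norm ?invr_ge0 ?frob_ge0 // mulVf ?gt_eqF.
by rewrite linearZ frobZ ger0_norm ?invr_ge0 ?frob_ge0 // ler_pdivrMl // mulrC.
Qed.

End LinearMapBounds.

Section PsdCone.
Variables (R : realType) (n : nat).
Implicit Types (P Q X : 'M[R]_n) (d : 'rV[R]_n).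

Lemma psd0 : psd (0 : 'M[R]_n).
Proof. by split=> [|v]; rewrite ?/symm ?trmx0 // mulmx0 mul0mx mxE. Qed.

Lemma psd_convex P Q (t : R) : psd P -> psd Q -> 0 <= t <= 1 -> psd (P + t *: (Q - P)).
Proof.
move=> [sP qP] [sQ qQ] /andP[t_ge0 t_le1]; split=> [|v].
  by rewrite /symm linearD /= linearZ /= linearB /= sP sQ.
have -> : P + t *: (Q - P) = (1 - t) *: P + t *: Q.
  by apply/matrixP => i j; rewrite !mxE; ring.
rewrite mulmxDr mulmxDl -!scalemxAr -!scalemxAl mxE.
rewrite [(_ *: (_ *m P *m _)) _ _]mxE [(_ *: (_ *m Q *m _)) _ _]mxE.
by rewrite addr_ge0 ?mulr_ge0 ?subr_ge0.
Qed.

Lemma psd_congr P (M : 'M[R]_n) : psd P -> psd (M^T *m P *m M).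
Proof.
move=> [sP qP]; split=> [|v]; first exact: symm_congr.
by have := qP (M *m v); rewrite trmx_mul !mulmxA.
Qed.

Lemma psd_diag_ge0 X i : psd X -> 0 <= X i i.
Proof. by case=> _ /(_ (delta_mx i 0)); rewrite trmx_delta -rowE -colE !mxE. Qed.

Lemma psd_conj_diag (U : 'M[R]_n) d :
  (forall i, 0 <= d 0 i) -> psd (U *m diag_mx d *m U^T).
Proof.
move=> d_ge0; rewrite -{1}(trmxK U); apply: psd_congr; split=> [|v].
  by rewrite /symm tr_diag_mx.
rewrite mul_mx_diag mxE; apply: sumr_ge0 => i _; rewrite !mxE.
by rewrite mulrAC -expr2 mulr_ge0 ?sqr_ge0.
Qed.

Lemma mxdot_conj_diag (U : 'M[R]_n) d X :
  mxdot (U *m diag_mx d *m U^T) X = \sum_i d 0 i * (U^T *m X *m U) i i.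
Proof.
rewrite /mxdot !trmx_mul trmxK tr_diag_mx mulmxA -[_ *m X]mulmxA mxtrace_mulC mulmxA.
by rewrite mul_mx_diag /mxtrace; apply: eq_bigr => i _; rewrite mxE mulrC.
Qed.

Lemma mxdot_conj_diag_psd_ge0 (U : 'M[R]_n) d X :
  (forall i, 0 <= d 0 i) -> psd X -> 0 <= mxdot (U *m diag_mx d *m U^T) X.
Proof.
move=> d_ge0 pX; rewrite mxdot_conj_diag; apply: sumr_ge0 => i _.
by rewrite mulr_ge0 // psd_diag_ge0 //; apply: psd_congr.
Qed.

End PsdCone.

Lemma le0_of_forall_le_mul (R : realFieldType) (a c : R) :
  (forall t, 0 < t <= 1 -> a <= t * c) -> a <= 0.
Proof.
move=> small; rewrite leNgt; apply/negP => a_gt0.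
have a_le_c : a <= c by rewrite -[c]mul1r; apply: small; rewrite ltr01 lexx.
have c_gt0 : 0 < c by apply: lt_le_trans a_gt0 a_le_c.
have t_gt0 : 0 < a / (2 * c) by rewrite divr_gt0 ?mulr_gt0.
have /small : 0 < a / (2 * c) <= 1 by rewrite t_gt0 ler_pdivrMr ?mulr_gt0 // mul1r; lra.
have -> : a / (2 * c) * c = a / 2 by field; rewrite gt_eqF.
lra.
Qed.

Section NearestPsd.
Variables (R : realType) (n : nat).
Implicit Types (P Q Z W : 'M[R]_n).

Definition psd_nearest Z P := psd P /\ forall Q, psd Q -> frob (Z - P) <= frob (Z - Q).

Lemma psd_nearest_variational Z P Q :
  psd_nearest Z P -> psd Q -> mxdot (Z - P) (Q - P) <= 0.
Proof.
move=> [pP minP] pQ; rewrite -(@ler_pM2l _ 2) // mulr0.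
apply: (le0_of_forall_le_mul (c := mxdot (Q - P) (Q - P))) => t /andP[t_gt0 t_le1].
have /minP : psd (P + t *: (Q - P)) by apply: psd_convex => //; rewrite (ltW t_gt0) t_le1.
rewrite ler_frob opprD addrA; move: (Z - P) (Q - P) => A B.
rewrite mxdotBl !linearB /= !mxdotZl !mxdotZr (mxdotC B A) => le_sq.
have : 0 <= t * (t * mxdot B B - 2 * mxdot A B) by lra.
by rewrite pmulr_rge0 //; lra.
Qed.

Lemma psd_nearest_tangent_le0 Z P W :
  psd_nearest Z P -> mxdot (P - Z) (W^T *m P + P *m W) <= 0.
Proof.
move=> nP; have [pP _] := nP.
apply: (le0_of_forall_le_mul (c := mxdot (P - Z) (W^T *m P *m W))) => t /andP[t_gt0 _].
(* The congruence (1 - tW)^T P (1 - tW) is a PSD competitor moving P to first order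
   along -t (W^T P + P W). *)
have := psd_nearest_variational nP (psd_congr (1%:M - t *: W) pP).
have -> : (1%:M - t *: W)^T *m P *m (1%:M - t *: W) - P
    = (t * t) *: (W^T *m P *m W) - t *: (W^T *m P + P *m W).
  have -> : (1%:M - t *: W)^T = 1%:M - t *: W^T by rewrite linearB /= linearZ /= trmx1.
  rewrite mulmxBl mul1mx !mulmxBr !mulmx1 -!scalemxAl -!scalemxAr mulmxBl -scalemxAl.
  move: (W^T *m P) (P *m W) (W^T *m P *m W) => A B C.
  by apply/matrixP => i j; rewrite !mxE; ring.
rewrite -opprB mxdotNl linearB /= !mxdotZr => tangent.
have : 0 <= t * (t * mxdot (P - Z) (W^T *m P *m W) - mxdot (P - Z) (W^T *m P + P *m W)).
  by lra.
by rewrite pmulr_rge0 //; lra.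
Qed.

Lemma psd_nearest_compl Z P : symm Z -> psd_nearest Z P -> P *m (P - Z) = 0.
Proof.
move=> sZ nP; have [[sP _] _] := nP.
set N := P - Z; have sN : symm N by apply: symmB.
(* The tangent inequality for W and -W forces tr (N P W) = 0; take W := P N. *)
have trNPW W : \tr (N *m P *m W) = 0.
  have dotE V : mxdot N (V^T *m P + P *m V) = 2 * \tr (N *m P *m V).
    rewrite /mxdot sN mulmxDr linearD /= -mulmxA mulr2n mulrDl mul1r; congr (_ + _).
    by rewrite -mxtrace_tr !trmx_mul trmxK sP sN mxtrace_mulC.
  have := psd_nearest_tangent_le0 W nP; have := psd_nearest_tangent_le0 (- W) nP.
  rewrite !dotE mulmxN linearN /=; lra.
apply: mxdotxx_eq0; rewrite /mxdot trmx_mul sN sP; exact: trNPW.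
Qed.

Lemma frob_psd_nearest_sub Z Z' P P' :
  psd_nearest Z P -> psd P' -> (forall Q, psd Q -> mxdot (Z' - P') (Q - P') <= 0) ->
  frob (P - P') <= frob (Z - Z').
Proof.
move=> nP pP' normal'; rewrite ler_frob.
have normal := psd_nearest_variational nP pP'; have {normal'} := normal' P nP.1.
have am := mxdot_amgm (Z - Z') (P - P') ltr01; rewrite invr1 !mul1r in am.
have splitE : mxdot (Z - Z') (P - P') - mxdot (P - P') (P - P')
    = - mxdot (Z - P) (P' - P) - mxdot (Z' - P') (P - P').
  rewrite -mxdotBl -[P' - P]opprB linearN /= opprK -mxdotBl; congr (mxdot _ _).
  by apply/matrixP => i j; rewrite !mxE; ring.
lra.
Qed.

End NearestPsd.

Lemma continuous_sum (R : realType) (T : topologicalType) I (s : seq I)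
    (F : I -> T -> R) :
  (forall i, continuous (F i)) -> continuous (fun x => \sum_(i <- s) F i x).
Proof.
move=> F_cont; elim: s => [|a s IH].
  rewrite (_ : (fun _ => _) = cst 0); first exact: cst_continuous.
  by apply/funext => x; rewrite big_nil.
rewrite (_ : (fun _ => _) = F a + fun x => \sum_(i <- s) F i x); last first.
  by apply/funext => x; rewrite big_cons.
by move=> x; apply: continuousD; [exact: F_cont | exact: IH].
Qed.

(* Compactness of bounded closed sets is available for row vectors only, so the
   minimization is carried out on vec_mx. *)
Section NearestPsdExists.
Variables (R : realType) (n : nat).
Local Notation V := 'rV[R]_(n * n).

Lemma continuous_vec_mx_entry i j : continuous (fun v : V => vec_mx v i j).
Proof.
rewrite (_ : (fun _ => _) = fun v : V => v 0 (mxvec_index i j)).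
  exact: coord_continuous.
by apply/funext => v; rewrite mxE.
Qed.

Lemma continuous_entrywise_sum (F : 'I_n -> 'I_n -> R -> R) :
  (forall i j, continuous (F i j)) ->
  continuous (fun v : V => \sum_i \sum_j F i j (vec_mx v i j)).
Proof.
move=> F_cont; do 2!apply: continuous_sum => ?.
move=> v; apply: continuous_comp; [exact: continuous_vec_mx_entry | exact: F_cont].
Qed.

Lemma quad_form_mxdot (w : 'cV[R]_n) (X : 'M[R]_n) :
  (w^T *m X *m w) 0 0 = mxdot (w *m w^T) X.
Proof.
by rewrite /mxdot trmx_mul trmxK mxtrace_mulC mulmxA mxtrace_mulC /mxtrace big_ord1 mulmxA.
Qed.

Lemma closed_psd_vec : closed [set v : V | psd (vec_mx v)].
Proof.
have -> : [set v : V | psd (vec_mx v)] =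
   \bigcap_(ij in [set: 'I_n * 'I_n]) [set v | vec_mx v ij.1 ij.2 - vec_mx v ij.2 ij.1 = 0]
   `&` \bigcap_(w in [set: 'cV[R]_n]) [set v | 0 <= mxdot (w *m w^T) (vec_mx v)].
  apply/seteqP; split=> v [sv qv].
    split=> [[i j] _ /=|w _ /=]; first by rewrite -{1}sv mxE subrr.
    by rewrite -quad_form_mxdot.
  split=> [|w]; last by rewrite quad_form_mxdot; apply: qv.
  apply/matrixP => i j; rewrite mxE; apply/eqP; rewrite -subr_eq0; apply/eqP.
  exact: (sv (j, i)).
apply: closedI; [apply: closed_bigI => -[i j] _ | apply: closed_bigI => w _].
  apply: (@preimage_closed _ _ _ [set x : R | x = 0]) => [? _|]; last exact: closed_eq.
  by apply: continuousB; apply: continuous_vec_mx_entry.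
apply: (@preimage_closed _ _ _ [set x : R | 0 <= x]) => [? _|]; last exact: closed_ge.
rewrite (_ : (fun _ => _) = fun v : V => \sum_k \sum_l (w *m w^T) k l * vec_mx v k l).
  apply: (@continuous_entrywise_sum (fun k l x => (w *m w^T) k l * x)) => k l x.
  by apply: cvgM; [exact: cvg_cst | exact: cvg_id].
by apply/funext => v; rewrite mxdotE.
Qed.

Lemma psd_nearest_exists (Z : 'M[R]_n) : exists P, psd_nearest Z P.
Proof.
pose dist (v : V) := mxdot (Z - vec_mx v) (Z - vec_mx v).
have dist_cont : continuous dist.
  rewrite (_ : dist = fun v => \sum_k \sum_l (Z k l - vec_mx v k l) * (Z k l - vec_mx v k l)).
    apply: (@continuous_entrywise_sum (fun k l x => (Z k l - x) * (Z k l - x))) => k l x.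
    by apply: cvgM; apply: cvgB; (exact: cvg_cst || exact: cvg_id).
  by apply/funext => v; rewrite /dist mxdotE; do 2!apply: eq_bigr => ? _; rewrite !mxE.
pose A := [set v : V | psd (vec_mx v)] `&` [set v | dist v <= mxdot Z Z].
have A_bounded : bounded_set A.
  rewrite /bounded_set /= /bounded_near; near=> M => v [_ dist_v] /=.
  apply: (@le_trans _ _ (2 * frob Z)); last first.
    by near: M; apply: nbhs_pinfty_ge; rewrite num_real.
  rewrite /Num.norm /= mx_normrE; apply: bigmax_le => [|[i0 k] _ /=].
    by rewrite mulr_ge0 ?frob_ge0.
  rewrite (ord1 i0); case/mxvec_indexP: k => i j.
  rewrite (_ : v 0 _ = vec_mx v i j); last by rewrite mxE.
  apply: le_trans (entry_le_frob _ i j) _.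
  rewrite -[vec_mx v](subKr Z); apply: le_trans (frobB _ _) _.
  by rewrite mulr2n mulrDl mul1r lerD2l ler_frob.
have A_closed : closed A.
  apply: closedI; first exact: closed_psd_vec.
  apply: (@preimage_closed _ _ _ [set x : R | x <= mxdot Z Z]) => [? _|].
    exact: dist_cont.
  exact: closed_le.
have A0 : A 0 by split; [rewrite /= raddf0; exact: psd0 | rewrite /= /dist raddf0 subr0].
have [c /set_mem [pc dist_c] c_min] := compact_EVT_min (ex_intro _ 0 A0)
  (bounded_closed_compact A_bounded A_closed) (continuous_subspaceT dist_cont).
exists (vec_mx c); split=> [//|Q pQ]; rewrite ler_frob -/(dist c).
have [dist_Q|/ltW] := leP (mxdot (Z - Q) (Z - Q)) (mxdot Z Z); last exact: le_trans dist_c.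
have /c_min : mxvec Q \in A by apply/mem_set; split; rewrite /= /dist mxvecK.
by rewrite /dist mxvecK.
Unshelve. all: by end_near.
Qed.

End NearestPsdExists.

Lemma projPSD_nearest (R : realType) n (Z : 'M[R]_n) : psd_nearest Z (projPSD Z).
Proof. exact: (xgetPex 0 (psd_nearest_exists Z)). Qed.

Section LinearConstraints.
Variables (R : realType) (n m : nat) (As : 'I_m -> 'M[R]_n).
Implicit Types (X Y Z : 'M[R]_n) (y : 'cV[R]_m).

Lemma Aop_is_linear : linear (Aop As).
Proof.
move=> a X Y; apply/matrixP => i j.
by rewrite !mxE /inprod mulmxDr -scalemxAr linearD linearZ.
Qed.
HB.instance Definition _ :=
  GRing.isLinear.Build R 'M[R]_n 'cV[R]_m _ (Aop As) Aop_is_linear.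

Lemma Aadj_is_linear : linear (Aadj As).
Proof.
move=> a y y'; rewrite /Aadj scaler_sumr -big_split; apply: eq_bigr => i _.
by rewrite !mxE scalerDl scalerA.
Qed.
HB.instance Definition _ :=
  GRing.isLinear.Build R 'cV[R]_m 'M[R]_n _ (Aadj As) Aadj_is_linear.

Lemma Pop_is_linear : linear (Pop As).
Proof. by move=> a X Y; rewrite /Pop !linearP. Qed.
HB.instance Definition _ :=
  GRing.isLinear.Build R 'M[R]_n 'M[R]_n _ (Pop As) Pop_is_linear.

Lemma inprod_Aadj y X : inprod (Aadj As y) X = \sum_i y i 0 * Aop As X i 0.
Proof.
rewrite /inprod /Aadj mulmx_suml linear_sum; apply: eq_bigr => i _.
by rewrite -scalemxAl linearZ mxE.
Qed.

Hypothesis As_symm : forall i, symm (As i).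

Lemma Aadj_symm y : symm (Aadj As y).
Proof.
rewrite /symm /Aadj linear_sum; apply: eq_bigr => i _.
by rewrite linearZ /= As_symm.
Qed.

Lemma Aop_Aadj y : Aop As (Aadj As y) = gram As *m y.
Proof.
apply/colP => i; rewrite !mxE /inprod /Aadj mulmx_sumr linear_sum.
by apply: eq_bigr => j _; rewrite -scalemxAr linearZ !mxE mulrC.
Qed.

Hypothesis As_surj : A_surj As.

Lemma gram_unit : gram As \in unitmx.
Proof.
rewrite -row_free_unit; apply: inj_row_free => v v_gram0; set y := v^T.
have gram_symm : (gram As)^T = gram As.
  by apply/matrixP => i j; rewrite !mxE /inprod mxtrace_mulC.
have AAy : Aop As (Aadj As y) = 0.
  by rewrite Aop_Aadj -gram_symm -trmx_mul v_gram0 trmx0.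
have Aadj_y0 : Aadj As y = 0.
  apply: mxdotxx_eq0; rewrite /mxdot Aadj_symm -/(inprod _ _) inprod_Aadj AAy.
  by rewrite big1 // => i _; rewrite [X in _ * X]mxE mulr0.
have [X [_ AX]] := As_surj y.
have /eqP : \sum_i y i 0 * y i 0 = 0.
  by rewrite -{2}AX -inprod_Aadj Aadj_y0 /inprod mul0mx linear0.
rewrite psumr_eq0 => [/allP y0|i _]; last by rewrite -expr2 sqr_ge0.
apply/rowP => i; have := y0 i (mem_index_enum _).
by rewrite implyTb mulf_eq0 orbb /y !mxE => /eqP.
Qed.

Lemma Pop_Aadj y : Pop As (Aadj As y) = Aadj As y.
Proof. by rewrite /Pop Aop_Aadj mulKmx // gram_unit. Qed.

Lemma admm_step_symm b C sigma Z : symm C -> symm (admm_step As b C sigma Z).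
Proof.
have sPop X : symm (Pop As X) by apply: Aadj_symm.
have [[sPi _] _] := projPSD_nearest Z.
move=> sC; rewrite /admm_step; apply: symmB; last exact: symmZ.
apply: symmD; last exact/symmZ/sPop.
by apply: symmD; [apply: symmD | apply: Aadj_symm].
Qed.

Lemma admm_step_sub b C sigma Z Xs ys Ss :
  Aop As Xs = b -> Aadj As ys + Ss = C ->
  admm_step As b C sigma Z - (Xs - sigma *: Ss)
  = Pop As ((Z - (Xs - sigma *: Ss)) - 2%:R *: (projPSD Z - Xs)) + (projPSD Z - Xs).
Proof.
move=> AXs dual_feas; rewrite /admm_step -dual_feas -AXs -/(Pop As Xs).
rewrite !(linearD, linearB, linearZ, linearN) /= Pop_Aadj.
move: (Pop As (projPSD Z)) (Pop As Z) (Pop As Xs) (Pop As Ss) (Aadj As ys) (projPSD Z).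
by move=> ? ? ? ? ? ?; apply/matrixP => i j; rewrite !mxE; ring.
Qed.

End LinearConstraints.

Section LinearizedStep.
Variables (R : realType) (n m : nat) (As : 'I_m -> 'M[R]_n).
Variables (Q : 'M[R]_n) (r : nat) (lam : 'I_n -> R).
Implicit Types (E H : 'M[R]_n).

Lemma hadamard_is_linear (W : 'M[R]_n) : linear (hadamard W).
Proof. by move=> a X Y; apply/matrixP => i j; rewrite !mxE mulrDr mulrCA. Qed.
HB.instance Definition _ W :=
  GRing.isLinear.Build R 'M[R]_n 'M[R]_n _ (hadamard W) (hadamard_is_linear W).

Lemma Dop_is_linear : linear (Dop Q r lam).
Proof.
move=> a X Y; rewrite /Dop !(mulmxDr, mulmxDl, linearP) -!scalemxAr -!scalemxAl.
by rewrite linearP mulmxDr mulmxDl -scalemxAr -scalemxAl.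
Qed.
HB.instance Definition _ :=
  GRing.isLinear.Build R 'M[R]_n 'M[R]_n _ (Dop Q r lam) Dop_is_linear.

Lemma Mop_is_linear : linear (Mop As Q r lam).
Proof.
move=> a X Y; rewrite /Mop /Pperp /Dperp !linearP !(linearD, linearB, linearZ, linearN) /=.
move: (Pop As X) (Pop As Y) (Pop As (Dop Q r lam X)) (Pop As (Dop Q r lam Y)).
move: (Dop Q r lam X) (Dop Q r lam Y) => ? ? ? ? ? ?.
by apply/matrixP => i j; rewrite !mxE; ring.
Qed.
HB.instance Definition _ :=
  GRing.isLinear.Build R 'M[R]_n 'M[R]_n _ (Mop As Q r lam) Mop_is_linear.

Lemma admm_error_decomp H E :
  Pop As (H - 2%:R *: E) + E
  = Mop As Q r lam H + ((E - Dop Q r lam H) - 2%:R *: Pop As (E - Dop Q r lam H)).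
Proof.
rewrite /Mop /Pperp /Dperp !(linearB, linearZ) /=.
move: (Pop As H) (Pop As E) (Pop As (Dop Q r lam H)) (Dop Q r lam H) => ? ? ? ?.
by apply/matrixP => i j; rewrite !mxE; ring.
Qed.

End LinearizedStep.

Lemma normr_le_of_mul_eq (R : realFieldType) (x a g K : R) :
  x != 0 -> x * a = g -> `|x|^-1 <= K -> `|a| <= K * `|g|.
Proof.
move=> x_neq0 xa_g x_K; have -> : a = x^-1 * g by rewrite -xa_g mulKf.
by rewrite normrM normfV ler_wpM2r ?normr_ge0.
Qed.

Lemma entry_mul_le_frob (R : realType) n (A B : 'M[R]_n) i j :
  `|(A *m B) i j| <= n%:R * (frob A * frob B).
Proof.
rewrite mxE; apply: le_trans (ler_norm_sum _ _ _) _.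
rewrite -[n in n%:R]card_ord mulr_natl -sumr_const; apply: ler_sum => k _.
by rewrite normrM ler_pM ?normr_ge0 ?entry_le_frob.
Qed.

Lemma hadamard_residual_entry (R : realType) n (W E H : 'M[R]_n) i j :
  (E - hadamard W H) i j = E i j - W i j * H i j.
Proof. by rewrite !mxE. Qed.

Section SpectralLinearization.
Variables (R : realType) (n : nat) (Q : 'M[R]_n) (lam : 'I_n -> R) (r : nat).
Hypothesis Q_orth : Q^T *m Q = 1%:M.
Hypothesis lam_gt0 : forall i : 'I_n, (i < r)%N -> 0 < lam i.
Hypothesis lam_lt0 : forall i : 'I_n, (r <= i)%N -> lam i < 0.

Definition lam_plus : 'rV[R]_n := \row_i (if (i < r)%N then lam i else 0).
Definition lam_minus : 'rV[R]_n := \row_i (if (i < r)%N then 0 else - lam i).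
Definition lam_inv_sum : R := \sum_i `|lam i|^-1.

Lemma lam_inv_le i : `|lam i|^-1 <= lam_inv_sum.
Proof.
rewrite /lam_inv_sum (bigD1 i) //= lerDl.
by apply: sumr_ge0 => k _; rewrite invr_ge0 normr_ge0.
Qed.

Lemma lam_inv_sum_ge0 : 0 <= lam_inv_sum.
Proof. by apply: sumr_ge0 => i _; rewrite invr_ge0 normr_ge0. Qed.

Lemma complementarity_entry (E F : 'M[R]_n) :
  (diag_mx lam_plus + E) *m (diag_mx lam_minus + F) = 0 ->
  forall i j, lam_plus 0 i * F i j + E i j * lam_minus 0 j + (E *m F) i j = 0.
Proof.
move=> prod0 i j; move: prod0; rewrite mulmxDl !mulmxDr !mul_diag_mx mul_mx_diag.
move: (E *m F) => G /(congr1 (fun M : 'M[R]_n => M i j)); rewrite !mxE.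
by case: (i < r)%N; case: (i == j); rewrite ?mulr1n ?mulr0n; lra.
Qed.

Lemma residual_entry_bound (E H G : 'M[R]_n) i j :
  lam_plus 0 i * (E i j - H i j) + E i j * lam_minus 0 j + G i j = 0 ->
  ~~ ((r <= i)%N && (j < r)%N) ->
  `|E i j - Omega r lam i j * H i j| <= lam_inv_sum * `|G i j|.
Proof.
rewrite !mxE -normrN; case: (ltnP i r) => ir; case: (ltnP j r) => jr //= compl _.
- have lam_i := lam_gt0 ir.
  apply: (@normr_le_of_mul_eq _ (lam i)); rewrite ?gt_eqF ?lam_inv_le //.
  by rewrite mul1r; lra.
- have lam_i := lam_gt0 ir; have lam_j := lam_lt0 jr.
  have gap_gt0 : 0 < lam i - lam j by rewrite subr_gt0; lra.
  apply: (@normr_le_of_mul_eq _ (lam i - lam j)); rewrite ?gt_eqF //.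
    have -> : (lam i - lam j) * - (E i j - lam i / (lam i - lam j) * H i j)
        = - ((lam i - lam j) * E i j - lam i * H i j) by field; rewrite gt_eqF.
    lra.
  apply: le_trans (lam_inv_le i); rewrite lef_pV2 ?posrE ?normr_gt0 ?gt_eqF //.
  by rewrite !gtr0_norm //; lra.
- have lam_j := lam_lt0 jr.
  apply: (@normr_le_of_mul_eq _ (- lam j)); first by rewrite oppr_eq0 lt_eqF.
    by rewrite mul0r subr0; lra.
  by rewrite normrN lam_inv_le.
Qed.

Lemma Omega_symm i j : Omega r lam i j = Omega r lam j i.
Proof. by rewrite !mxE; case: (ltnP i r) => ir; case: (ltnP j r) => jr. Qed.

Lemma hadamard_residual_bound (E H : 'M[R]_n) : symm E -> symm H ->
  (diag_mx lam_plus + E) *m (diag_mx lam_minus + (E - H)) = 0 ->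
  frob (E - hadamard (Omega r lam) H)
    <= n%:R ^+ 2 * lam_inv_sum * (frob E * frob (E - H)).
Proof.
move=> sE sH prod0; set G := E *m (E - H).
have compl i j : lam_plus 0 i * (E i j - H i j) + E i j * lam_minus 0 j + G i j = 0.
  by have := complementarity_entry prod0 i j; rewrite [(E - H) i j]mxE [(- H) i j]mxE.
set c := lam_inv_sum * (n%:R * (frob E * frob (E - H))).
have c_ge0 : 0 <= c by rewrite !mulr_ge0 ?lam_inv_sum_ge0 ?frob_ge0.
have G_le k l : lam_inv_sum * `|G k l| <= c.
  by rewrite /c ler_wpM2l ?lam_inv_sum_ge0 ?entry_mul_le_frob.
have entry_le i j : `|(E - hadamard (Omega r lam) H) i j| <= c.
  rewrite hadamard_residual_entry.
  have [/andP[ri jr]|upper] := boolP ((r <= i)%N && (j < r)%N); last first.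
    exact: le_trans (residual_entry_bound (compl i j) upper) (G_le i j).
  rewrite -{1}sE -{1}sH [E^T i j]mxE [H^T i j]mxE Omega_symm.
  apply: le_trans (G_le j i); apply: residual_entry_bound => //.
  by rewrite negb_and -ltnNge jr.
have -> : n%:R ^+ 2 * lam_inv_sum * (frob E * frob (E - H)) = n%:R * c.
  by rewrite /c; ring.
exact: frob_le_entry_bound.
Qed.

Local Notation Xs := (Q *m diag_mx lam_plus *m Q^T).
Local Notation Sg := (Q *m diag_mx lam_minus *m Q^T).

Lemma lam_plus_ge0 i : 0 <= lam_plus 0 i.
Proof. by rewrite mxE; case: ltnP => // /lam_gt0 /ltW. Qed.

Lemma lam_minus_ge0 i : 0 <= lam_minus 0 i.
Proof. by rewrite mxE; case: ltnP => // /lam_lt0; rewrite oppr_ge0 => /ltW. Qed.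

Lemma conj_orth_diag d : Q^T *m (Q *m diag_mx d *m Q^T) *m Q = diag_mx d.
Proof. by rewrite !mulmxA Q_orth mul1mx -mulmxA Q_orth mulmx1. Qed.

Lemma lam_minus_normal_cone P : psd P -> mxdot ((Xs - Sg) - Xs) (P - Xs) <= 0.
Proof.
move=> pP; rewrite addrAC subrr add0r mxdotNl linearB /= oppr_le0 subr_ge0.
have -> : mxdot Sg Xs = 0.
  rewrite mxdot_conj_diag conj_orth_diag big1 // => i _; rewrite !mxE eqxx mulr1n.
  by case: ltnP; rewrite ?mul0r ?mulr0.
exact: mxdot_conj_diag_psd_ge0 lam_minus_ge0 pP.
Qed.

Lemma psd_nearest_compl_eigenbasis Z P : symm Z -> psd_nearest Z P ->
  (diag_mx lam_plus + Q^T *m (P - Xs) *m Q)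
    *m (diag_mx lam_minus + (Q^T *m (P - Xs) *m Q - Q^T *m (Z - (Xs - Sg)) *m Q)) = 0.
Proof.
move=> sZ nP; have QQt : Q *m Q^T = 1%:M by apply: mulmx1C.
have -> : diag_mx lam_plus + Q^T *m (P - Xs) *m Q = Q^T *m P *m Q.
  by rewrite mulmxBr mulmxBl conj_orth_diag addrC subrK.
have -> : diag_mx lam_minus + (Q^T *m (P - Xs) *m Q - Q^T *m (Z - (Xs - Sg)) *m Q)
    = Q^T *m (P - Z) *m Q.
  rewrite -{1}conj_orth_diag -mulmxBl -mulmxBr -mulmxDl -mulmxDr; congr (_ *m _ *m _).
  by apply/matrixP => i j; rewrite !mxE; ring.
rewrite !mulmxA -(mulmxA _ Q Q^T) QQt mulmx1 -(mulmxA Q^T P).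
by rewrite psd_nearest_compl // mulmx0 mul0mx.
Qed.

Lemma psd_nearest_linearization Z P : symm Z -> psd_nearest Z P ->
  frob ((P - Xs) - Dop Q r lam (Z - (Xs - Sg)))
    <= 2 * n%:R ^+ 2 * lam_inv_sum * frob (Z - (Xs - Sg)) ^+ 2.
Proof.
move=> sZ nP; have [[sP _] _] := nP.
set E := P - Xs; set H := Z - (Xs - Sg).
have E_le_H : frob E <= frob H.
  apply: frob_psd_nearest_sub nP _ lam_minus_normal_cone.
  by apply: psd_conj_diag; apply: lam_plus_ge0.
have sE' : symm (Q^T *m E *m Q) by apply/symm_congr/symmB => //; apply: symm_conj_diag.
have sH' : symm (Q^T *m H *m Q).
  by apply/symm_congr/symmB => //; apply: symmB; apply: symm_conj_diag.
have := hadamard_residual_bound sE' sH' (psd_nearest_compl_eigenbasis sZ nP).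
have -> : E - Dop Q r lam H
    = Q *m (Q^T *m E *m Q - hadamard (Omega r lam) (Q^T *m H *m Q)) *m Q^T.
  rewrite mulmxBr mulmxBl; congr (_ - _).
  have QQt : Q *m Q^T = 1%:M by apply: mulmx1C.
  by rewrite !mulmxA QQt mul1mx -mulmxA QQt mulmx1.
rewrite frob_conj // => /le_trans; apply.
have E'_H' : frob (Q^T *m E *m Q - Q^T *m H *m Q) <= 2 * frob H.
  by apply: le_trans (frobB _ _) _; rewrite !frob_conjT // mulr2n mulrDl mul1r lerD2r.
rewrite frob_conjT // [2 * _]mulrC -!mulrA ler_wpM2l ?exprn_ge0 ?ler0n //.
rewrite ler_wpM2l ?ler0n // [in X in _ <= X]mulrCA ler_wpM2l ?lam_inv_sum_ge0 //.
by rewrite expr2 [in X in _ <= X]mulrCA ler_pM ?frob_ge0.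
Qed.

End SpectralLinearization.

Lemma eventually_le_rate (R : realType) (e f : nat -> R) (mu D rho : R) :
  (forall k, 0 <= e k) -> e k @[k --> \oo] --> 0 -> mu < rho -> 0 <= D ->
  (forall k, f k <= mu * e k + D * e k ^+ 2) ->
  exists N, forall k, (N <= k)%N -> f k <= rho * e k.
Proof.
move=> e_ge0 e_cvg0 mu_rho D_ge0 f_le.
pose eta := (rho - mu) / (D + 1).
have eta_gt0 : 0 < eta by rewrite divr_gt0 ?subr_gt0 //; lra.
have D_eta : D * eta <= rho - mu.
  rewrite /eta mulrA ler_pdivrMr; last lra.
  have : 0 < rho - mu by rewrite subr_gt0.
  nra.
have [N _ e_small] := (cvgrPdist_le _ _).1 e_cvg0 _ eta_gt0.
exists N => k /e_small /=; rewrite sub0r normrN ger0_norm // => ek_le.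
apply: le_trans (f_le k) _.
have : D * e k ^+ 2 <= (rho - mu) * e k.
  by rewrite expr2 mulrA ler_wpM2r // (le_trans _ D_eta) // ler_wpM2l.
lra.
Qed.

Lemma admm_step_error_bound (R : realType) (n m : nat)
    (C : 'M[R]_n) (As : 'I_m -> 'M[R]_n) (b : 'cV[R]_m) (sigma : R)
    (Xs : 'M[R]_n) (ys : 'cV[R]_m) (Ss : 'M[R]_n)
    (Q : 'M[R]_n) (lam : 'I_n -> R) (r : nat) :
  (forall i, symm (As i)) -> A_surj As ->
  Aop As Xs = b -> Aadj As ys + Ss = C ->
  Q^T *m Q = 1%:M ->
  (forall i : 'I_n, (i < r)%N -> 0 < lam i) ->
  (forall i : 'I_n, (r <= i)%N -> lam i < 0) ->
  Xs = Q *m diag_mx (lam_plus lam r) *m Q^T ->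
  sigma *: Ss = Q *m diag_mx (lam_minus lam r) *m Q^T ->
  exists2 D, 0 <= D & forall Z, symm Z ->
    frob (admm_step As b C sigma Z - (Xs - sigma *: Ss))
      <= opnorm (Mop As Q r lam) * frob (Z - (Xs - sigma *: Ss))
         + D * frob (Z - (Xs - sigma *: Ss)) ^+ 2.
Proof.
move=> sA surj primal dual Q_orth lam_gt0 lam_lt0 hXs hSs.
have [KP KP_ge0 Pop_le] := linear_frob_bound (Pop As).
set c := 2 * n%:R ^+ 2 * lam_inv_sum lam.
have c_ge0 : 0 <= c by rewrite !mulr_ge0 ?exprn_ge0 ?ler0n ?lam_inv_sum_ge0.
exists ((2 * KP + 1) * c) => [|Z sZ]; first by rewrite mulr_ge0 // addr_ge0 ?mulr_ge0.
rewrite (admm_step_sub sA surj _ _ primal dual) (admm_error_decomp As Q r lam).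
 apply: le_trans (frobD _ _) _.
have sZs : symm (Xs - sigma *: Ss).
  by rewrite hSs hXs; apply: symmB; apply: symm_conj_diag.
apply: lerD; first by apply: frob_le_opnorm; apply: symmB.
set W := _ - Dop Q r lam _.
have W_le : frob W <= c * frob (Z - (Xs - sigma *: Ss)) ^+ 2.
  have := psd_nearest_linearization Q_orth lam_gt0 lam_lt0 sZ (projPSD_nearest Z).
  by rewrite -hXs -hSs.
apply: le_trans (frobB _ _) _; rewrite frobZ ger0_norm // -mulrA.
apply: (@le_trans _ _ ((2 * KP + 1) * frob W)).
  by have := Pop_le W; rewrite -mulr_natl; lra.
apply: le_trans (ler_wpM2l _ W_le) _; first by rewrite addr_ge0 ?mulr_ge0.
by rewrite mulrA.
Qed.

Theorem theorem3 (R : realType) (n m : nat)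
  (C : 'M[R]_n) (As : 'I_m -> 'M[R]_n) (b : 'cV[R]_m) (sigma : R)
  (Z : nat -> 'M[R]_n)
  (Xs : 'M[R]_n) (ys : 'cV[R]_m) (Ss : 'M[R]_n)
  (Qs : 'M[R]_n) (lam : 'I_n -> R) (r : nat) :
  symm C -> (forall i, symm (As i)) ->
  A_surj As ->
  0 < sigma ->
  symm (Z 0%N) ->
  (forall k, Z k.+1 = admm_step As b C sigma (Z k)) ->
  KKT As b C Xs ys Ss ->
  frob (Z k - (Xs - sigma *: Ss)) @[k --> \oo] --> 0 ->
  (\rank Xs + \rank Ss)%N = n ->
  (* spectral decomposition of Z* = Xs - sigma Ss *)
  Qs^T *m Qs = 1%:M ->
  (forall i j : 'I_n, (i <= j)%N -> lam j <= lam i) ->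
  (forall i : 'I_n, (i < r)%N -> 0 < lam i) ->
  (forall i : 'I_n, (r <= i)%N -> lam i < 0) ->
  \rank Xs = r ->
  Xs - sigma *: Ss = Qs *m diag_mx (\row_i lam i) *m Qs^T ->
  Xs = Qs *m diag_mx (\row_i (if (i < r)%N then lam i else 0)) *m Qs^T ->
  sigma *: Ss = Qs *m diag_mx (\row_i (if (i < r)%N then 0 else - lam i)) *m Qs^T ->
  (* primal nondegeneracy: N_X* ∩ range of Aadj = {0} *)
  (forall H y, in_NX Qs r H -> H = Aadj As y -> H = 0) ->
  (* dual nondegeneracy: N_S* ∩ N(A) = {0} *)
  (forall H, in_NS Qs r H -> Aop As H = 0 -> H = 0) ->
  forall rho : R, opnorm (Mop As Qs r lam) < rho -> rho < 1 ->
  exists kbar : nat, forall k : nat, (kbar <= k)%N ->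
    frob (Z k.+1 - (Xs - sigma *: Ss)) <= rho * frob (Z k - (Xs - sigma *: Ss)).
Proof.
move=> sC sA surj _ sZ0 step [primal dual _ _ _] Z_cvg _ Q_orth _ lam_gt0 lam_lt0 _ _ hXs hSs.
move=> _ _ rho M_rho _.
have sZ k : symm (Z k) by case: k => // k; rewrite step; apply: admm_step_symm.
have [D D_ge0 step_le] :=
  admm_step_error_bound sA surj primal dual Q_orth lam_gt0 lam_lt0 hXs hSs.
apply: (eventually_le_rate (e := fun k => frob (Z k - (Xs - sigma *: Ss))) _ Z_cvg M_rho D_ge0).
  by move=> k; apply: frob_ge0.
by move=> k; rewrite step; apply: step_le.
Qed.
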